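(* Let $\mathcal{H}$ be a complex linear space with a non-degenerate indefinite inner product $[\cdot,\cdot]$, and $\mathcal{F}_{++}=\{f\in\mathcal{H}:[f,f]>0\}$. Let $\{W(t):t\ge0\}$ be a family of linear operators on $\mathcal{H}$ with $W(0)=I$ and $W(t_1+t_2)=W(t_1)W(t_2)=W(t_2)W(t_1)$ for all $t_1,t_2\ge0$, such that each $W(t)$ maps $\mathcal{F}_{++}$ onto $\mathcal{F}_{++}$ in a one-to-one manner. For $t\ge0$ put $$\theta(t)=\inf_{f\in\mathcal{F}_{++}}\frac{[W(t)f,W(t)f]}{[f,f]}.$$ If for some $f\in\mathcal{F}_{++}$ the function $r(t)=[W(t)f,W(t)f]$ is continuous on $[0,\infty)$, then there exists $\alpha\in\mathbb{R}$ such that $\theta(t)=e^{\alpha t}$ for all $t\ge0$.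
   Context: An indefinite inner product is a Hermitian sesquilinear form $[\cdot,\cdot]$ on $\mathcal{H}$ (linear in the second argument) admitting vectors of strictly positive and strictly negative square; non-degenerate means $[f,g]=0$ for all $g$ forces $f=0$. *)

From HB Require Import structures.
From mathcomp Require Import all_boot all_order all_algebra.
From mathcomp Require Import all_classical all_reals all_analysis.
From mathcomp Require Import complex.
Set Implicit Arguments. Unset Strict Implicit. Unset Printing Implicit Defensive.
Import Order.TTheory GRing.Theory Num.Theory.
Import numFieldNormedType.Exports.
Local Open Scope ring_scope.
Local Open Scope classical_set_scope.

Notation cplx R := (complex.complex R).

(* Hermitian sesquilinear form on V, linear in the SECOND argument. *)
Definition ip_hermitian_sesq (R : realType) (V : lmodType (cplx R))
  (ip : V -> V -> cplx R) : Prop :=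
  (forall f g h (a : cplx R), ip f (a *: g + h) = a * ip f g + ip f h) /\
  (forall f g, ip g f = complex.conjc (ip f g)).

Definition ip_nondegenerate (R : realType) (V : lmodType (cplx R))
  (ip : V -> V -> cplx R) : Prop :=
  forall f, (forall g, ip f g = 0) -> f = 0.

Definition ip_indefinite (R : realType) (V : lmodType (cplx R))
  (ip : V -> V -> cplx R) : Prop :=
  (exists f, 0 < ip f f) /\ (exists g, ip g g < 0).

Definition Fpp (R : realType) (V : lmodType (cplx R))
  (ip : V -> V -> cplx R) : set V := [set f | 0 < ip f f].

(* ip_theta(t) = inf_{f in F_{++}} [W f, W f] / [f, f]  (real parts; these
   quantities are real since the form is Hermitian). *)
Definition ip_theta (R : realType) (V : lmodType (cplx R))
  (ip : V -> V -> cplx R) (W : R -> V -> V) (t : R) : R :=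
  inf [set complex.Re (ip (W t f) (W t f)) / complex.Re (ip f f) | f in Fpp ip].

(* Each W t is a linear bijection of the positive cone F++, and such a map
   multiplies q f = [f, f] by a constant.  It maps nonpositive vectors to
   nonpositive ones and null vectors to null ones; a negative f lies on a line
   f + R x0 (x0 positive) crossing the null cone twice, which forces
   q (W f) / q f = q (W x0) / q x0, and lines through a negative vector extend
   this to every f.  Hence theta t = r t / r 0, which is multiplicative by the
   semigroup law and continuous with r, so ln theta is a continuous additive
   function on [0, +oo[, hence linear. *)

From HB Require Import structures.
From mathcomp Require Import all_boot all_order all_algebra.
From mathcomp Require Import all_classical all_reals all_analysis.
From mathcomp Require Import complex.
From mathcomp Require Import ring lra.
Import Order.TTheory GRing.Theory Num.Theory.
Import numFieldNormedType.Exports.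
Local Open Scope ring_scope.
Local Open Scope classical_set_scope.
Set Implicit Arguments. Unset Strict Implicit. Unset Printing Implicit Defensive.

Section RealQuadratics.
Variable R : realFieldType.
Implicit Types a b c s u A B C : R.

Lemma quadratic_pos_large a b c : 0 < c ->
  exists2 U, 0 <= U & forall u, U <= u -> 0 < a + 2 * u * b + u ^+ 2 * c.
Proof.
move=> c_gt0; pose m := `|a| + 2 * `|b|.
have m_ge0 : 0 <= m by rewrite addr_ge0 ?mulr_ge0.
exists (1 + m / c) => [|u Hu]; first by rewrite addr_ge0 // divr_ge0 // ltW.
have u_ge1 : 1 <= u by apply: le_trans Hu; rewrite lerDl divr_ge0 // ltW.
have m_lt : m < u * c.
  have : (1 + m / c) * c <= u * c by rewrite ler_pM2r.
  by rewrite mulrDl mul1r divfK ?gt_eqF //; lra.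
have ha : - `|a| <= a by rewrite lerNl -normrN ler_norm.
have hb : - (u * `|b|) <= u * b.
  by rewrite -mulrN ler_wpM2l ?(le_trans ler01) // lerNl -normrN ler_norm.
have hm : u * m < u * (u * c) by rewrite ltr_pM2l // (lt_le_trans ltr01).
have ha' : `|a| <= u * `|a| by rewrite -{1}(mul1r `|a|) ler_wpM2r.
rewrite expr2 -mulrA; rewrite /m mulrDr in hm; lra.
Qed.

Lemma quadratic_neg_small a b c : a < 0 ->
  exists2 e, 0 < e & a + 2 * e * b + e ^+ 2 * c < 0.
Proof.
move=> a_lt0; pose M := 2 * `|b| + `|c| + 1.
have M_ge1 : 1 <= M by rewrite lerDr addr_ge0 ?mulr_ge0.
pose e := Num.min 1 (- a / (2 * M)).
have e_gt0 : 0 < e by rewrite lt_min ltr01 divr_gt0 //; lra.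
exists e => //.
have e_le1 : e <= 1 by rewrite ge_min lexx.
have eM : e * M <= - a / 2.
  have : e <= - a / (2 * M) by rewrite ge_min lexx orbT.
  by rewrite ler_pdivlMr ?ler_pdivlMr; lra.
have hb : e * b <= e * `|b| by rewrite ler_wpM2l ?ler_norm ?ltW.
have hc : e ^+ 2 * c <= e * `|c|.
  have : e ^+ 2 * c <= e ^+ 2 * `|c| by rewrite ler_wpM2l ?ler_norm ?sqr_ge0.
  have : e ^+ 2 * `|c| <= e * `|c| by rewrite ler_wpM2r // expr2 ler_piMr // ltW.
  lra.
rewrite /M in eM; lra.
Qed.

Lemma linear_eq0_two_points A B s1 s2 : s1 != s2 ->
  A + 2 * s1 * B = 0 -> A + 2 * s2 * B = 0 -> A = 0.
Proof.
move=> s12 h1 h2; have : (s1 - s2) * B = 0 by lra.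
move/eqP; rewrite mulf_eq0 subr_eq0 (negbTE s12) /= => /eqP B0.
by move: h1; rewrite B0 mulr0 addr0.
Qed.

Lemma quadratic_eq0_on_ray A B C U :
  (forall u, U <= u -> A + 2 * u * B + u ^+ 2 * C = 0) -> A = 0.
Proof.
move=> h; have h0 := h U (lexx U).
have h1 := h (U + 1) (ler_wpDr ler01 (lexx U)).
have h2 := h (U + 2) (ler_wpDr (ler0n _ 2) (lexx U)).
have C0 : C = 0 by nra.
move: h0 h1; rewrite C0 !mulr0 !addr0 => h0 h1.
have B0 : B = 0 by lra.
by move: h0; rewrite B0 mulr0 addr0.
Qed.

End RealQuadratics.

Lemma quadratic_two_roots (R : rcfType) (a b c : R) : a < 0 -> 0 < c ->
  exists s1 s2, [/\ s1 != s2, a + 2 * s1 * b + s1 ^+ 2 * c = 0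
                 & a + 2 * s2 * b + s2 ^+ 2 * c = 0].
Proof.
move=> a_lt0 c_gt0; pose D := b ^+ 2 - a * c.
have D_gt0 : 0 < D by have := sqr_ge0 b; rewrite /D; nra.
pose r := Num.sqrt D.
have r_gt0 : 0 < r by rewrite sqrtr_gt0.
have r2 : r ^+ 2 = D by rewrite sqr_sqrtr // ltW.
have root s : (c * s + b) ^+ 2 = D -> a + 2 * s * b + s ^+ 2 * c = 0.
  move=> hs; have : c * (a + 2 * s * b + s ^+ 2 * c) = 0.
    by rewrite -[RHS](subrr D) -{1}hs /D; ring.
  by move/eqP; rewrite mulf_eq0 gt_eqF //= => /eqP.
exists ((r - b) / c), ((- r - b) / c); split.
- apply/eqP => /(congr1 (fun z => z * c)); rewrite !divfK ?gt_eqF //; lra.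
- by apply: root; rewrite mulrC divfK ?gt_eqF // subrK.
- by apply: root; rewrite mulrC divfK ?gt_eqF // subrK sqrrN.
Qed.

Section AdditiveOnHalfLine.
Variable R : realType.
Implicit Types (h : R -> R) (a b t : R).

Let additive_nonneg h :=
  forall a b, 0 <= a -> 0 <= b -> h (a + b) = h a + h b.

Lemma additive_nonneg_natmul h n t : additive_nonneg h -> 0 <= t ->
  h (n%:R * t) = n%:R * h t.
Proof.
move=> hD t0; have h0 : h 0 = 0.
  by have := hD 0 0 (lexx 0) (lexx 0); rewrite addr0; lra.
elim: n => [|n IH]; first by rewrite !mul0r.
by rewrite -natr1 !mulrDl !mul1r hD ?IH ?mulr_ge0.
Qed.

Lemma additive_nonneg_fraction h k n : additive_nonneg h -> h 1 = 0 ->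
  (0 < n)%N -> h (k%:R / n%:R) = 0.
Proof.
move=> hD h1 n0; have n0R : (n%:R : R) != 0 by rewrite pnatr_eq0 -lt0n.
have inv_ge0 : 0 <= (n%:R : R)^-1 by rewrite invr_ge0.
have hinv : h n%:R^-1 = 0.
  apply/eqP; have := additive_nonneg_natmul n hD inv_ge0.
  by rewrite mulfV // h1 => /esym/eqP; rewrite mulf_eq0 (negbTE n0R).
by rewrite additive_nonneg_natmul // hinv mulr0.
Qed.

Lemma eq0_near_fractions h t : 0 <= t ->
  h @ within `[0, +oo[ (nbhs t) --> h t ->
  (forall k n, (0 < n)%N -> h (k%:R / n%:R) = 0) -> h t = 0.
Proof.
move=> t0 /cvgrPdist_lt h_cont h_frac; apply/eqP; rewrite -normr_eq0.
apply/negP => /negP ht_neq0; have ht_gt0 : 0 < `|h t| by rewrite normr_gt0 -normr_eq0.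
have /nbhs_ballP[d /= d0 Hd] := h_cont _ ht_gt0.
pose n := (Num.truncn d^-1).+1.
have n_inv_lt : n%:R^-1 < d.
  have dinv_gt0 : 0 < d^-1 by rewrite invr_gt0.
  have := truncn_itv (ltW dinv_gt0) => /andP[_].
  by move=> lt; rewrite -[X in _ < X](invrK d) ltf_pV2 ?posrE ?invr_gt0 ?ltr0n.
pose s : R := (Num.truncn (n%:R * t))%:R / n%:R.
have nR : (0 : R) < n%:R by rewrite ltr0n.
have /andP[lo hi] := truncn_itv (mulr_ge0 (ler0n _ n) t0).
have s_ge0 : 0 <= s by rewrite divr_ge0.
have s_le : s <= t by rewrite /s ler_pdivrMr // [t * _]mulrC.
have t_lt : t - s < n%:R^-1.
  have : t < (Num.truncn (n%:R * t)).+1%:R / n%:R by rewrite ltr_pdivlMr // [t * _]mulrC.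
  by rewrite -natr1 mulrDl mul1r -/s; lra.
have : `|h t - h s| < `|h t|.
  apply: Hd; last by rewrite in_itv /= s_ge0.
  by rewrite -ball_normE /= ger0_norm; lra.
by rewrite /s h_frac // subr0 ltxx.
Qed.

Lemma additive_nonneg_linear h : {within `[0, +oo[, continuous h} ->
  additive_nonneg h -> forall t, 0 <= t -> h t = h 1 * t.
Proof.
move=> /subspace_continuousP h_cont hD t t0.
pose g x := h x - h 1 * x.
have gD : additive_nonneg g by move=> a b a0 b0; rewrite /g hD // mulrDr; ring.
have g1 : g 1 = 0 by rewrite /g mulr1 subrr.
suff : g t = 0 by move/eqP; rewrite subr_eq0 => /eqP.
apply: (eq0_near_fractions t0) => [|k n n0]; last exact: additive_nonneg_fraction.
apply: cvgB; first by apply: h_cont; rewrite /= in_itv /= t0.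
by apply: cvgMr; exact: cvg_within.
Qed.

Lemma multiplicative_nonneg_exp (K : R -> R) : {within `[0, +oo[, continuous K} ->
  (forall t, 0 <= t -> 0 < K t) ->
  (forall a b, 0 <= a -> 0 <= b -> K (a + b) = K a * K b) ->
  forall t, 0 <= t -> K t = expR (ln (K 1) * t).
Proof.
move=> /subspace_continuousP K_cont K_gt0 KM t t0.
have lnK_cont : {within `[0, +oo[, continuous (fun s => ln (K s))}.
  apply/subspace_continuousP => s s0; apply: cvg_comp (K_cont s s0) _.
  by apply: continuous_ln; rewrite K_gt0 //; move: s0; rewrite /= in_itv /= andbT.
have lnKD : additive_nonneg (fun s => ln (K s)).
  by move=> a b a0 b0; rewrite /= KM // lnM ?posrE ?K_gt0.
by rewrite -(additive_nonneg_linear lnK_cont lnKD t0) /= lnK ?posrE ?K_gt0.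
Qed.
End AdditiveOnHalfLine.

Definition qform (R : realType) (V : lmodType (cplx R)) (ip : V -> V -> cplx R)
  (f : V) : R := complex.Re (ip f f).

Section HermitianForm.
Variables (R : realType) (V : lmodType (cplx R)) (ip : V -> V -> cplx R).
Hypothesis ip_herm : ip_hermitian_sesq ip.
Local Notation Q := (qform ip).
Local Open Scope complex_scope.

Lemma hermitian_Im_diag f : complex.Im (ip f f) = 0.
Proof.
by have [_ /(_ f f)] := ip_herm; case: (ip f f) => a b /= [] b_eq; lra.
Qed.

Lemma Fpp_qform f : Fpp ip f <-> 0 < Q f.
Proof. by rewrite /Fpp /= ltcE hermitian_Im_diag eqxx. Qed.

Lemma qform_addZ f x (s : R) :
  Q (f + s%:C *: x) = Q f + 2 * s * complex.Re (ip x f) + s ^+ 2 * Q x.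
Proof.
have [ipD ip_conj] := ip_herm; rewrite /qform [f + _]addrC.
set u := s%:C *: x + f.
rewrite ipD (ip_conj x u) (ip_conj f u) /u ipD ipD (ip_conj f x).
case: (ip x x) => a1 b1; case: (ip f x) => a2 b2; case: (ip f f) => a3 b3.
by rewrite /= /real_complex_def; simpc => /=; ring.
Qed.

Lemma ip_theta_scaled (W : R -> V -> V) t (k : R) : (exists f, Fpp ip f) ->
  (forall f, Q (W t f) = k * Q f) -> ip_theta ip W t = k.
Proof.
move=> [f0 f0_Fpp] W_scale; rewrite /ip_theta.
suff -> : [set Q (W t f) / Q f | f in Fpp ip] = [set k] by exact: inf1.
have Q_neq0 f : Fpp ip f -> Q f != 0 by move/Fpp_qform/lt0r_neq0.
apply/seteqP; split => z /=.
  by case=> f f_Fpp <-; rewrite W_scale mulfK ?Q_neq0.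
by move=> ->; exists f0 => //; rewrite W_scale mulfK ?Q_neq0.
Qed.

Section FppBijection.
Variable T : {linear V -> V}.
Hypothesis T_Fpp : forall f, Fpp ip f -> Fpp ip (T f).
Hypothesis T_inj : {in Fpp ip &, injective T}.
Hypothesis T_onto : forall g, Fpp ip g -> exists2 f, Fpp ip f & T f = g.

Lemma qformT_addZ f x (s : R) :
  Q (T (f + s%:C *: x)) = Q (T f) + 2 * s * complex.Re (ip (T x) (T f)) + s ^+ 2 * Q (T x).
Proof. by rewrite linearD linearZ qform_addZ. Qed.

(* If T f were positive it would be T h for a positive h; adding a large
   multiple of h to f yields a positive vector with the same image as
   (1 + U) h, so injectivity forces f = h. *)
Lemma qform_nonpos_map f : Q f <= 0 -> Q (T f) <= 0.
Proof.
move=> Qf_le0; rewrite leNgt; apply/negP => QTf_gt0.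
have [h h_Fpp Th] := T_onto (proj2 (Fpp_qform _) QTf_gt0).
have Qh_gt0 := proj1 (Fpp_qform h) h_Fpp.
have [U U_ge0 HU] := quadratic_pos_large (Q f) (complex.Re (ip h f)) Qh_gt0.
have h1_Fpp : Fpp ip (h + U%:C *: h).
  apply/Fpp_qform; rewrite qform_addZ.
  have : 0 <= U * Q h by rewrite mulr_ge0 // ltW.
  have : 0 <= U ^+ 2 * Q h by rewrite mulr_ge0 ?sqr_ge0 // ltW.
  rewrite /qform in Qh_gt0 *; lra.
have f1_Fpp : Fpp ip (f + U%:C *: h) by apply/Fpp_qform; rewrite qform_addZ HU.
have := T_inj (mem_set h1_Fpp) (mem_set f1_Fpp).
rewrite !linearD !linearZ /= Th => /(_ erefl) /addIr h_eq.
by move: Qf_le0; rewrite -h_eq leNgt Qh_gt0.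
Qed.

Variable x0 : V.
Hypothesis x0_Fpp : Fpp ip x0.

(* Near a null vector f, f + s x0 is positive for small s of the right sign,
   while its image would stay negative if T f were. *)
Lemma qform_null_map f : Q f = 0 -> Q (T f) = 0.
Proof.
move=> Qf0; apply/eqP; rewrite eq_le qform_nonpos_map ?Qf0 //= leNgt.
apply/negP => QTf_lt0; pose P := complex.Re (ip x0 f).
have [sg sg2 sgP] : exists2 sg : R, sg ^+ 2 = 1 & 0 <= sg * P.
  have [P_ge0|P_lt0] := lerP 0 P; first by exists 1; rewrite ?expr1n ?mul1r.
  by exists (-1); rewrite ?sqrrN ?expr1n // mulN1r oppr_ge0 ltW.
have [e e_gt0 He] := quadratic_neg_small
  (sg * complex.Re (ip (T x0) (T f))) (Q (T x0)) QTf_lt0.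
have Qx0_gt0 := proj1 (Fpp_qform x0) x0_Fpp.
have g_Fpp : Fpp ip (f + (sg * e)%:C *: x0).
  apply/Fpp_qform; rewrite qform_addZ Qf0 -/P exprMn sg2 mul1r.
  have : 0 <= e * (sg * P) by rewrite mulr_ge0 // ltW.
  have : 0 < e ^+ 2 * Q x0 by rewrite mulr_gt0 // exprn_gt0.
  lra.
have := proj1 (Fpp_qform _) (T_Fpp g_Fpp).
rewrite qformT_addZ exprMn sg2 mul1r; lra.
Qed.

(* T keeps null both points where the line f + R x0 crosses the null cone,
   which pins down the factor in front of Q f. *)
Lemma qform_neg_map f : Q f < 0 -> Q (T f) = Q (T x0) / Q x0 * Q f.
Proof.
move=> Qf_lt0; set k := Q (T x0) / Q x0.
have Qx0_gt0 := proj1 (Fpp_qform x0) x0_Fpp.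
have QTx0 : Q (T x0) = k * Q x0 by rewrite /k divfK ?gt_eqF.
have [s1 [s2 [s12 r1 r2]]] :=
  quadratic_two_roots (complex.Re (ip x0 f)) Qf_lt0 Qx0_gt0.
have scaled_on_null s : Q (f + s%:C *: x0) = 0 ->
    Q (T f) - k * Q f +
    2 * s * (complex.Re (ip (T x0) (T f)) - k * complex.Re (ip x0 f)) = 0.
  move=> null; have := qform_null_map null; have := congr1 ( *%R k) null.
  by rewrite qformT_addZ qform_addZ QTx0 mulr0; lra.
have null1 : Q (f + s1%:C *: x0) = 0 by rewrite qform_addZ.
have null2 : Q (f + s2%:C *: x0) = 0 by rewrite qform_addZ.
have := linear_eq0_two_points s12 (scaled_on_null _ null1) (scaled_on_null _ null2).
lra.
Qed.

Hypothesis ip_indef : ip_indefinite ip.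

Lemma qform_map f : Q (T f) = Q (T x0) / Q x0 * Q f.
Proof.
have [y0 Qy0_lt0] : exists y0, Q y0 < 0.
  by have [_ [y0]] := ip_indef; rewrite ltcE hermitian_Im_diag => /andP[_]; exists y0.
set k := Q (T x0) / Q x0.
have NQy0_gt0 : 0 < - Q y0 by rewrite oppr_gt0.
have [U _ HU] := quadratic_pos_large (- Q f) (- complex.Re (ip y0 f)) NQy0_gt0.
apply/eqP; rewrite -subr_eq0; apply/eqP.
apply: (quadratic_eq0_on_ray
  (B := complex.Re (ip (T y0) (T f)) - k * complex.Re (ip y0 f))
  (C := Q (T y0) - k * Q y0) (U := U)) => u Hu.
have neg : Q (f + u%:C *: y0) < 0 by rewrite qform_addZ; have := HU u Hu; lra.
by have := qform_neg_map neg; rewrite qformT_addZ qform_addZ -/k; lra.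
Qed.

End FppBijection.
End HermitianForm.

Theorem theorem2p6 (R : realType) (V : lmodType (cplx R))
  (ip : V -> V -> cplx R) (W : R -> {linear V -> V}) :
  ip_hermitian_sesq ip -> ip_nondegenerate ip -> ip_indefinite ip ->
  (forall v, W 0 v = v) ->
  (forall t1 t2, 0 <= t1 -> 0 <= t2 ->
     (forall v, W (t1 + t2) v = W t1 (W t2 v)) /\
     (forall v, W (t1 + t2) v = W t2 (W t1 v))) ->
  (forall t, 0 <= t ->
     (forall f, Fpp ip f -> Fpp ip (W t f)) /\
     {in Fpp ip &, injective (W t)} /\
     (forall g, Fpp ip g -> exists2 f, Fpp ip f & W t f = g)) ->
  (exists2 f, Fpp ip f &
     {within `[0, +oo[, continuous (fun t => complex.Re (ip (W t f) (W t f)))}) ->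
  exists alpha : R, forall t, 0 <= t -> ip_theta ip (fun s => W s) t = expR (alpha * t).
Proof.
move=> ip_herm _ ip_indef _ W_add W_bij [f0 f0_Fpp r_cont].
pose K t := qform ip (W t f0) / qform ip f0.
have Qf0_gt0 : 0 < qform ip f0 by apply/(Fpp_qform ip_herm).
have W_scale t : 0 <= t -> forall f, qform ip (W t f) = K t * qform ip f.
  by move=> t0; have [W_Fpp [W_inj W_onto]] := W_bij t t0; exact: qform_map.
have K_gt0 t : 0 <= t -> 0 < K t.
  move=> t0; rewrite divr_gt0 //; apply/(Fpp_qform ip_herm); exact: (W_bij t t0).1.
have KM a b : 0 <= a -> 0 <= b -> K (a + b) = K a * K b.
  by move=> a0 b0; rewrite /K (W_add a b a0 b0).1 W_scale // mulrA.
have K_cont : {within `[0, +oo[, continuous K} by move=> t; apply: cvgMl; exact: r_cont.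
exists (ln (K 1)) => t t0.
rewrite (ip_theta_scaled ip_herm _ (W_scale t t0)); last by exists f0.
exact: multiplicative_nonneg_exp.
Qed.
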